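(* Let $(M,a)$ be Kerr–AdS parameters with $(\mathfrak m,\mathfrak a)\in\mathscr P$, and for $\tilde\lambda\in\mathbb R$ define on $x\in[0,1]$ $$W_1(x)=\Xi^2-\Big[\Xi a^2\omega_-^2+2a\omega_-\Xi\frac{a^2}{l^2}\Big]x^2(1-x^2)-\tilde\lambda\,\Delta_x(1-x^2).$$ Then: (1) if $\tilde\lambda<\Xi^2$, then $W_1>0$ on $[0,1]$; (2) if $\tilde\lambda=\Xi^2$, then $W_1>0$ on $(0,1]$ and $W_1(0)=0$; (3) if $\tilde\lambda>\Xi^2$, then $W_1$ has exactly one root $x_0$ in $[0,1]$, this root satisfies $x_0\in(0,1)$, and $\frac{dW_1}{dx}(x)\ge c\,\tilde\lambda x$ for all $x\in[0,1]$, for a constant $c>0$ depending only on the black hole parameters.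
   Context: $l=\sqrt{-3/\Lambda}$ with $\Lambda<0$; $\Delta(r)=(r^2+a^2)(1+r^2/l^2)-2Mr$ with roots $0<r_-<r_+$, $0<a<l$, $r_+^2>al$ (i.e. $(\mathfrak m,\mathfrak a)=(M\sqrt3/l,a\sqrt3/l)$ lies in the subextremal, Hawking–Reall-bound parameter set $\mathscr P$). $\Xi=1-a^2/l^2$, $\Delta_x=1-\frac{a^2}{l^2}x^2$, $\omega_-=\frac{a\Xi}{r_-^2+a^2}$. *)

From Stdlib Require Import Reals.
From Coquelicot Require Import Coquelicot.
Open Scope R_scope.

Definition ads_l (Lam : R) : R := sqrt (- 3 / Lam).

Definition Delta (M a l r : R) : R :=
  (r ^ 2 + a ^ 2) * (1 + r ^ 2 / l ^ 2) - 2 * M * r.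

Definition Xi (a l : R) : R := 1 - a ^ 2 / l ^ 2.

Definition Delta_x (a l x : R) : R := 1 - a ^ 2 / l ^ 2 * x ^ 2.

Definition omega_minus (a l rm : R) : R := a * Xi a l / (rm ^ 2 + a ^ 2).

(* Kerr-AdS parameters in the subextremal Hawking-Reall parameter set:
   0 < a < l, Delta has roots 0 < r_- < r_+, and r_+^2 > a l. *)
Definition KerrAdS_params (M a l rm rp : R) : Prop :=
  0 < a < l /\ 0 < rm < rp /\ Delta M a l rm = 0 /\ Delta M a l rp = 0 /\
  rp ^ 2 > a * l.

Definition W1 (a l rm lam x : R) : R :=
  let X := Xi a l in
  let w := omega_minus a l rm in
  X ^ 2
  - (X * a ^ 2 * w ^ 2 + 2 * a * w * X * (a ^ 2 / l ^ 2)) * x ^ 2 * (1 - x ^ 2)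
  - lam * Delta_x a l x * (1 - x ^ 2).

(** Put al = a^2/l^2, so that Xi = 1 - al, and u = a omega_-, so that
    0 < al < 1 and 0 < u < Xi.  In the variable t = x^2, W_1 is the quadratic
      (Xi^2 - lam) (1 - al t) (1 - t) + t (1 - t) Xi K + t^2 Xi^2,
    where K = (Xi - u)(1 + al + u) > 0; this gives (1) and (2).  For
    lam > Xi^2 the t-derivative is affine in t and both its endpoint values
    are at least lam times a positive constant, so W_1 increases strictly from
    W_1(0) = Xi^2 - lam < 0 to W_1(1) = Xi^2 > 0, and dW_1/dx = 2x dW_1/dt. *)

From Stdlib Require Import Reals Lra Psatz.
From Coquelicot Require Import Coquelicot.
Open Scope R_scope.

Section W1_in_square.

Variables al u : R.
Hypothesis al_bounds : 0 < al < 1.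
Hypothesis u_bounds : 0 < u < 1 - al.

Definition Wsq (lam t : R) : R :=
  (1 - al) ^ 2 - (1 - al) * (u ^ 2 + 2 * u * al) * t * (1 - t)
  - lam * (1 - al * t) * (1 - t).

Definition Wsq_slope (lam t : R) : R :=
  (1 - t) * (lam * (1 + al) - (1 - al) * (u ^ 2 + 2 * u * al))
  + t * (lam * (1 - al) + (1 - al) * (u ^ 2 + 2 * u * al)).

Let K := (1 - al) * (1 + al) - (u ^ 2 + 2 * u * al).

Definition Wsq_slope_floor : R := Rmin (K / (1 - al)) (1 - al).

Lemma K_pos : 0 < K.
Proof.
  unfold K.
  replace ((1 - al) * (1 + al) - (u ^ 2 + 2 * u * al))
    with ((1 - al - u) * (1 + al + u)) by ring.
  apply Rmult_lt_0_compat; lra.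
Qed.

Lemma Wsq_slope_floor_pos : 0 < Wsq_slope_floor.
Proof.
  apply Rmin_glb_lt; [apply Rdiv_lt_0_compat; [apply K_pos | lra] | lra].
Qed.

Lemma Wsq_decomp lam t :
  Wsq lam t = ((1 - al) ^ 2 - lam) * (1 - al * t) * (1 - t)
              + t * (1 - t) * (1 - al) * K + t ^ 2 * (1 - al) ^ 2.
Proof. unfold Wsq, K; ring. Qed.

Lemma Wsq_mixed_term_nonneg t : 0 <= t <= 1 -> 0 <= t * (1 - t) * (1 - al) * K.
Proof. intros. pose proof K_pos. repeat apply Rmult_le_pos; lra. Qed.

Lemma Wsq_pos_subcritical lam t :
  lam < (1 - al) ^ 2 -> 0 <= t <= 1 -> 0 < Wsq lam t.
Proof.
  intros Hlam Ht. rewrite Wsq_decomp.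
  pose proof (Wsq_mixed_term_nonneg t Ht).
  assert (0 <= t ^ 2 * (1 - al) ^ 2) by (apply Rmult_le_pos; nra).
  destruct (Req_dec t 1) as [-> | Ht1]; [nra |].
  assert (0 < ((1 - al) ^ 2 - lam) * (1 - al * t) * (1 - t))
    by (repeat apply Rmult_lt_0_compat; nra).
  lra.
Qed.

Lemma Wsq_pos_critical t : 0 < t <= 1 -> 0 < Wsq ((1 - al) ^ 2) t.
Proof.
  intros Ht. rewrite Wsq_decomp.
  pose proof (Wsq_mixed_term_nonneg t ltac:(lra)).
  assert (0 < t ^ 2 * (1 - al) ^ 2) by (apply Rmult_lt_0_compat; nra).
  nra.
Qed.

Lemma Wsq_secant lam t1 t2 :
  Wsq lam t1 - Wsq lam t2 = (t1 - t2) * Wsq_slope lam ((t1 + t2) / 2).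
Proof. unfold Wsq, Wsq_slope; field. Qed.

Lemma Wsq_slope_lb lam t :
  lam > (1 - al) ^ 2 -> 0 <= t <= 1 -> Wsq_slope lam t >= lam * Wsq_slope_floor.
Proof.
  intros Hlam Ht. unfold Wsq_slope.
  set (B := (1 - al) * (u ^ 2 + 2 * u * al)).
  assert (B_pos : 0 < B) by (apply Rmult_lt_0_compat; nra).
  assert (lam_pos : 0 < lam) by nra.
  pose proof (Rmin_l (K / (1 - al)) (1 - al)).
  pose proof (Rmin_r (K / (1 - al)) (1 - al)).
  fold Wsq_slope_floor in *.
  assert (at0 : lam * (1 + al) - B >= lam * (K / (1 - al))).
  { assert (E : lam * (1 + al) - B - lam * (K / (1 - al))
                = (u ^ 2 + 2 * u * al) * (lam - (1 - al) ^ 2) / (1 - al))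
      by (unfold B, K; field; lra).
    assert (0 <= (u ^ 2 + 2 * u * al) * (lam - (1 - al) ^ 2) / (1 - al)).
    { repeat apply Rmult_le_pos; try nra. left; apply Rinv_0_lt_compat; lra. }
    lra. }
  assert (lam * Wsq_slope_floor <= lam * (K / (1 - al))) by nra.
  assert (lam * Wsq_slope_floor <= lam * (1 - al)) by nra.
  nra.
Qed.

Lemma Wsq_sqr_injective lam y z :
  lam > (1 - al) ^ 2 -> 0 <= y <= 1 -> 0 <= z <= 1 ->
  Wsq lam (y ^ 2) = Wsq lam (z ^ 2) -> y = z.
Proof.
  intros Hlam Hy Hz E.
  assert (0 <= y ^ 2 <= 1) by (split; nra).
  assert (0 <= z ^ 2 <= 1) by (split; nra).
  pose proof (Wsq_secant lam (y ^ 2) (z ^ 2)) as S.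
  pose proof (Wsq_slope_lb lam ((y ^ 2 + z ^ 2) / 2) Hlam ltac:(split; lra)).
  assert (0 < lam * Wsq_slope_floor)
    by (apply Rmult_lt_0_compat; [nra | apply Wsq_slope_floor_pos]).
  assert (Hsq : (y ^ 2 - z ^ 2) * Wsq_slope lam ((y ^ 2 + z ^ 2) / 2) = 0) by lra.
  apply Rmult_integral in Hsq as [Hsq | Hsq]; [nra | lra].
Qed.

Lemma continuous_Wsq_sqr lam : continuity (fun x => Wsq lam (x ^ 2)).
Proof. unfold Wsq. reg. Qed.

Lemma Wsq_sqr_root_exists lam :
  lam > (1 - al) ^ 2 -> exists x0, 0 < x0 < 1 /\ Wsq lam (x0 ^ 2) = 0.
Proof.
  intros Hlam.
  assert (W0 : Wsq lam (0 ^ 2) < 0) by (unfold Wsq; nra).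
  assert (Wsq1_pos : 0 < Wsq lam (1 ^ 2)) by (unfold Wsq; nra).
  destruct (IVT _ 0 1 (continuous_Wsq_sqr lam) Rlt_0_1 W0 Wsq1_pos) as [x0 [Hx0 E]].
  exists x0. split; [| exact E].
  split; apply Rnot_le_lt; intros Hle.
  - replace x0 with 0 in E by lra. lra.
  - replace x0 with 1 in E by lra. lra.
Qed.

Lemma is_derive_Wsq_sqr lam x :
  is_derive (fun x : R => Wsq lam (x ^ 2)) x (2 * x * Wsq_slope lam (x ^ 2)).
Proof. unfold Wsq, Wsq_slope. auto_derive; [auto | ring]. Qed.

Lemma Derive_Wsq_sqr_lb lam x :
  lam > (1 - al) ^ 2 -> 0 <= x <= 1 ->
  Derive (fun x : R => Wsq lam (x ^ 2)) x >= 2 * Wsq_slope_floor * lam * x.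
Proof.
  intros Hlam Hx.
  rewrite (is_derive_unique _ _ _ (is_derive_Wsq_sqr lam x)).
  pose proof (Wsq_slope_lb lam (x ^ 2) Hlam ltac:(split; nra)).
  nra.
Qed.

End W1_in_square.

Lemma sq_ratio_bounds a l : 0 < a < l -> 0 < a ^ 2 / l ^ 2 < 1.
Proof.
  intros H. split.
  - apply Rdiv_lt_0_compat; nra.
  - apply (Rmult_lt_reg_r (l ^ 2)); [nra |]. field_simplify; nra.
Qed.

Lemma a_omega_minus_bounds a l rm :
  0 < a < l -> 0 < rm -> 0 < a * omega_minus a l rm < Xi a l.
Proof.
  intros Ha Hrm.
  pose proof (sq_ratio_bounds a l Ha).
  assert (HXi : 0 < Xi a l) by (unfold Xi; lra).
  assert (0 < a ^ 2 / (rm ^ 2 + a ^ 2) < 1).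
  { split; [apply Rdiv_lt_0_compat; nra |].
    apply (Rmult_lt_reg_r (rm ^ 2 + a ^ 2)); [nra |]. field_simplify; nra. }
  replace (a * omega_minus a l rm) with (Xi a l * (a ^ 2 / (rm ^ 2 + a ^ 2)))
    by (unfold omega_minus; field; nra).
  split; nra.
Qed.

Lemma W1_as_Wsq a l rm lam x :
  W1 a l rm lam x = Wsq (a ^ 2 / l ^ 2) (a * omega_minus a l rm) lam (x ^ 2).
Proof. unfold W1, Wsq, Delta_x, Xi; ring. Qed.

Theorem lemma3p1 (Lam M a rm rp : R) :
  Lam < 0 ->
  KerrAdS_params M a (ads_l Lam) rm rp ->
  let l := ads_l Lam in
  let X := Xi a l in
  (forall lam : R, lam < X ^ 2 ->
     forall x : R, 0 <= x <= 1 -> W1 a l rm lam x > 0) /\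
  (forall lam : R, lam = X ^ 2 ->
     (forall x : R, 0 < x <= 1 -> W1 a l rm lam x > 0) /\ W1 a l rm lam 0 = 0) /\
  (exists c : R, c > 0 /\
     forall lam : R, lam > X ^ 2 ->
       (exists x0 : R, 0 < x0 < 1 /\ W1 a l rm lam x0 = 0 /\
          (forall y : R, 0 <= y <= 1 -> W1 a l rm lam y = 0 -> y = x0)) /\
       (forall x : R, 0 <= x <= 1 ->
          Derive (W1 a l rm lam) x >= c * lam * x)).
Proof.
  intros _ [Ha [Hr _]] l X.
  pose proof (sq_ratio_bounds a l Ha) as Hal.
  pose proof (a_omega_minus_bounds a l rm Ha ltac:(lra)) as Hu.
  unfold X, Xi in *.
  setoid_rewrite W1_as_Wsq.
  set (al := a ^ 2 / l ^ 2) in *. set (u := a * omega_minus a l rm) in *.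
  split; [| split].
  - intros lam Hlam x Hx. apply Wsq_pos_subcritical; nra.
  - intros lam ->. split.
    + intros x Hx. apply Wsq_pos_critical; nra.
    + unfold Wsq; ring.
  - exists (2 * Wsq_slope_floor al u).
    split; [pose proof (Wsq_slope_floor_pos al u Hal Hu); lra |].
    intros lam Hlam. split.
    + destruct (Wsq_sqr_root_exists al u Hal Hu lam Hlam) as [x0 [Hx0 E]].
      exists x0. split; [exact Hx0 | split; [exact E |]].
      intros y Hy Ey. apply (Wsq_sqr_injective al u Hal Hu lam); [lra | lra | lra | congruence].
    + intros x Hx.
      rewrite (Derive_ext _ (fun x => Wsq al u lam (x ^ 2))) by apply W1_as_Wsq.
      apply Derive_Wsq_sqr_lb; assumption.
Qed.
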